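(* Let $\mathcal G=(\mathcal V,\mathcal E)$ be a weakly connected digraph without self-loops with node set partitioned as $\mathcal V=\mathcal M\cup\mathcal P$ (nodes in $\mathcal M$: DGUs and loads; nodes in $\mathcal P$: power lines), such that every edge has exactly one endpoint in $\mathcal M$ and one in $\mathcal P$, and each line $l\in\mathcal P$ has exactly one in-neighbour $a\in\mathcal M$ and exactly one out-neighbour $b\in\mathcal M$. To each node $k\in\mathcal M$ associate a voltage $V_k\in\mathbb R^2$, interaction output $z_k=V_k$ and interaction input \[ d_k=-\sum_{l\in\mathcal N_k^+}I_l+\sum_{l\in\mathcal N_k^-}I_l , \] and to each line $l\in\mathcal P$ (from $a$ to $b$) associate a current $I_l\in\mathbb R^2$, interaction output $z_l=[I_l^\top,-I_l^\top]^\top\in\mathbb R^4$ and interaction input $d_l=[V_a^\top,V_b^\top]^\top$. Then this interconnection is skew-symmetric: there exist matrices $\phi_{vw}$ of appropriate dimensions such that for every $v\in\mathcal V$, \[ d_v=\sum_{w\in\mathcal N_v}\phi_{vw}z_w=\sum_{w\in\mathcal N^+_v}\phi_{vw}z_w-\sum_{w\in\mathcal N^-_v}\phi_{wv}^\top z_w , \] i.e. $\phi_{vw}=-\phi_{wv}^\top$ for all neighbouring $v,w$, so that the stacked relation $d=\Phi z$ has $\Phi=-\Phi^\top$.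
   Context: For a node $v$ of a digraph, $\mathcal N_v^+=\{w:(v,w)\in\mathcal E\}$ denotes the out-neighbours, $\mathcal N_v^-=\{w:(w,v)\in\mathcal E\}$ the in-neighbours and $\mathcal N_v=\mathcal N_v^+\cup\mathcal N_v^-$. The edge orientation gives the reference direction of the positive line current. All electrical vectors are dq components. *)

From HB Require Import structures.
From mathcomp Require Import all_boot all_order all_algebra.
Set Implicit Arguments. Unset Strict Implicit. Unset Printing Implicit Defensive.
Import Order.TTheory GRing.Theory Num.Theory.
Local Open Scope ring_scope.

Section Microgrid.
Variables (R : realFieldType) (T : finType) (E : rel T) (M : {set T}).

Definition weakly_connected : Prop :=
  forall x y : T, connect (fun a b => E a b || E b a) x y.

Definition nbhd (v : T) : {set T} := [set w | E v w || E w v].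

Definition ndim (v : T) : nat := if v \in M then 2%N else 4%N.

Variables (Vol : T -> 'cV[R]_2) (Cur : T -> 'cV[R]_2).

Definition V_in (l : T) : 'cV[R]_2 := oapp Vol 0 [pick a | E a l].
Definition V_out (l : T) : 'cV[R]_2 := oapp Vol 0 [pick b | E l b].

Definition zout (v : T) : 'cV[R]_(ndim v) :=
  match v \in M as b return 'cV[R]_(if b then 2%N else 4%N) with
  | true => Vol v
  | false => col_mx (Cur v) (- Cur v)
  end.

Definition din (v : T) : 'cV[R]_(ndim v) :=
  match v \in M as b return 'cV[R]_(if b then 2%N else 4%N) with
  | true => - (\sum_(l | E v l) Cur l) + \sum_(l | E l v) Cur l
  | false => col_mx (V_in v) (V_out v)
  end.

End Microgrid.

From HB Require Import structures.
From mathcomp Require Import all_boot all_order all_algebra.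
Import Order.TTheory GRing.Theory Num.Theory.
Local Open Scope ring_scope.

(* The only nonzero blocks of Phi couple a node k with an incident line l.
   With [x] := 1 if x holds and 0 otherwise, take
     phi_kl = [ -[k -> l] I2, -[l -> k] I2 ]   and   phi_lk = [ [k -> l] I2 ; [l -> k] I2 ],
   so phi_kl = - phi_lk^T by construction.  Applied to z_l = [I_l; -I_l], phi_kl
   yields ([l -> k] - [k -> l]) I_l, whose sum over the lines at k is d_k; applied
   to z_k = V_k, phi_lk stacks [k -> l] V_k over [l -> k] V_k, and since l has a
   unique in-neighbour a and a unique out-neighbour b, the sum over k is
   [V_a; V_b] = d_l. *)

Lemma sum_col_mx (V : nmodType) (I : Type) (r : seq I) (P : pred I) m1 m2 n
    (A : I -> 'M[V]_(m1, n)) (B : I -> 'M[V]_(m2, n)) :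
  \sum_(i <- r | P i) col_mx (A i) (B i) =
  col_mx (\sum_(i <- r | P i) A i) (\sum_(i <- r | P i) B i).
Proof.
elim/big_rec3: _ => [|i x y z _ ->]; first by rewrite col_mx0.
by rewrite add_col_mx.
Qed.

Lemma sum_indicator_scale {K : pzRingType} {V : lmodType K} {I : finType}
    (A : {pred I}) (P : pred I) (F : I -> V) :
  (forall i, P i -> i \in A) -> \sum_(i | P i) F i = \sum_(i in A) (P i)%:R *: F i.
Proof.
move=> sub_PA; rewrite big_mkcond [RHS]big_mkcond; apply: eq_bigr => i _.
case Pi: (P i); last by rewrite scale0r if_same.
by rewrite (sub_PA i Pi) scale1r.
Qed.

Lemma pick_card1_sum (V : nmodType) (I : finType) (P : pred I) (F : I -> V) :
  #|[set i | P i]| = 1%N -> oapp F 0 [pick i | P i] = \sum_(i | P i) F i.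
Proof.
move/eqP/cards1P => [a defP].
have P_eq i : P i = (i == a) by rewrite -in_set1 -defP inE.
rewrite (eq_bigl (pred1 a)) ?big_pred1_eq; last by move=> i; rewrite P_eq.
case: pickP => [i | noP] /=; first by rewrite P_eq => /eqP ->.
by move: (noP a); rewrite P_eq eqxx.
Qed.

(* [2 + 2] rather than [4], so that [col_mx] of two 2-vectors needs no cast. *)
Local Notation dim b := (if b then 2%N else (2 + 2)%N).

Section Interconnection.
Variables (R : realFieldType) (T : finType) (E : rel T) (M : {set T}).

Local Notation "[ v --> w ]" := ((E v w)%:R : R) (at level 0, format "[ v  -->  w ]").

Definition coupling (bv bw : bool) (v w : T) : 'M[R]_(dim bv, dim bw) :=
  match bv as b1, bw as b2 return 'M[R]_(dim b1, dim b2) with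
  | true, false => row_mx (- [v --> w]%:M) (- [w --> v]%:M)
  | false, true => col_mx [w --> v]%:M [v --> w]%:M
  | _, _ => 0
  end.

Lemma coupling_skew bv bw v w : coupling bv bw v w = - (coupling bw bv w v)^T.
Proof.
case: bv; case: bw => /=; rewrite ?trmx0 ?oppr0 //.
  by rewrite tr_col_mx !tr_scalar_mx opp_row_mx.
by rewrite tr_row_mx !linearN /= !tr_scalar_mx opp_col_mx !opprK.
Qed.

Lemma coupling_eq0 bv bw v w : w \notin nbhd E v -> coupling bv bw v w = 0.
Proof.
rewrite inE => /norP[/negbTE vw /negbTE wv].
by case: bv; case: bw; rewrite //= vw wv mulr0n raddf0 ?oppr0 ?row_mx0 ?col_mx0.
Qed.

Hypothesis bipartite : forall v w : T, E v w -> (v \in M) != (w \in M).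

Lemma nbhd_opposite_side v w : w \in nbhd E v -> (w \in M) = ~~ (v \in M).
Proof.
by rewrite inE => /orP[] /bipartite; case: (v \in M) (w \in M) => -[].
Qed.

Variables (Vol Cur : T -> 'cV[R]_2).

(* [zout] and [din] with [v \in M] abstracted to [b], which makes case analysis on it possible. *)
Definition output (b : bool) (w : T) : 'cV[R]_(dim b) :=
  match b as b0 return 'cV[R]_(dim b0) with
  | true => Vol w
  | false => col_mx (Cur w) (- Cur w)
  end.

Definition input (b : bool) (v : T) : 'cV[R]_(dim b) :=
  match b as b0 return 'cV[R]_(dim b0) with
  | true => - (\sum_(l | E v l) Cur l) + \sum_(l | E l v) Cur l
  | false => col_mx (V_in E Vol v) (V_out E Vol v)
  end.

Lemma coupling_node_line v w :
  coupling true false v w *m output false w = ([w --> v] - [v --> w]) *: Cur w.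
Proof. by rewrite mul_row_col !mulNmx !mul_scalar_mx scalerN opprK scalerBl addrC. Qed.

Lemma coupling_line_node v w :
  coupling false true v w *m output true w = col_mx ([w --> v] *: Vol w) ([v --> w] *: Vol w).
Proof. by rewrite mul_col_mx !mul_scalar_mx. Qed.

Lemma input_node v : v \in M ->
  input true v = \sum_(w in nbhd E v) coupling true (w \in M) v w *m output (w \in M) w.
Proof.
move=> vM; under eq_bigr => w /nbhd_opposite_side-> do rewrite vM coupling_node_line.
rewrite /= (sum_indicator_scale (nbhd E v) (E v)) => [|w]; last by rewrite inE => ->.
rewrite (sum_indicator_scale (nbhd E v) (E^~ v)) => [|w]; last first.
  by rewrite inE => ->; rewrite orbT.
by rewrite addrC -sumrN -big_split; apply: eq_bigr => w _; rewrite scalerBl.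
Qed.

Hypothesis lines : forall l : T, l \notin M ->
  #|[set a | E a l]| = 1%N /\ #|[set b | E l b]| = 1%N.

Lemma input_line l : l \notin M ->
  input false l = \sum_(w in nbhd E l) coupling false (w \in M) l w *m output (w \in M) w.
Proof.
move=> lM; have [in1 out1] := lines _ lM.
under eq_bigr => w /nbhd_opposite_side-> do rewrite (negbTE lM) coupling_line_node.
rewrite sum_col_mx /= /V_in /V_out !pick_card1_sum //.
by rewrite (sum_indicator_scale (nbhd E l) (E^~ l)) ?(sum_indicator_scale (nbhd E l) (E l))
  // => w; rewrite inE => ->; rewrite ?orbT.
Qed.

Lemma input_coupling_sum v b : (v \in M) = b ->
  input b v = \sum_(w in nbhd E v) coupling b (w \in M) v w *m output (w \in M) w.
Proof. by case: b => vM; [apply: input_node | apply: input_line]; rewrite vM. Qed.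

End Interconnection.

Arguments coupling {R T} E bv bw v w.

Theorem lemma3 (R : realFieldType) (T : finType) (E : rel T) (M : {set T})
  (no_loop : forall v : T, ~~ E v v)
  (bipartite : forall v w : T, E v w -> (v \in M) != (w \in M))
  (lines : forall l : T, l \notin M ->
      #|[set a | E a l]| = 1%N /\ #|[set b | E l b]| = 1%N)
  (wconn : weakly_connected E) :
  exists phi : forall v w : T, 'M[R]_(ndim M v, ndim M w),
    (forall v w : T, phi v w = - (phi w v)^T) /\
    (forall v w : T, w \notin nbhd E v -> phi v w = 0) /\
    (forall (Vol Cur : T -> 'cV[R]_2) (v : T),
        din E M Vol Cur v = \sum_(w in nbhd E v) phi v w *m zout M Vol Cur w).
Proof.
exists (fun v w => coupling E (v \in M) (w \in M) v w).
split; first by move=> v w; apply: coupling_skew.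
split; first by move=> v w; apply: coupling_eq0.
by move=> Vol Cur v; apply: input_coupling_sum.
Qed.
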